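(* Let $I_0\ge1$ be an integer, let $\alpha_1,\dots,\alpha_{I_0-1}$ be non-negative reals, and let $0\le l<u$. For $x\ge0$ let $\beta^{(x)}$ be the family indexed by $\{1,2,\dots\}\cup\{\omega\}$ with $\beta^{(x)}_i=[i<I_0]\alpha_i+[i=I_0]x$. Then $\kappa_i(\beta^{(u)}_i)-\kappa_i(\beta^{(l)}_i)\le u-l$; explicitly, $$\sqrt{\alpha_1^{2^1}+\sqrt{\alpha_2^{2^2}+\dots+\sqrt{\alpha_{I_0-1}^{2^{I_0-1}}+u^{2^{I_0-1}}}}}-\sqrt{\alpha_1^{2^1}+\sqrt{\alpha_2^{2^2}+\dots+\sqrt{\alpha_{I_0-1}^{2^{I_0-1}}+l^{2^{I_0-1}}}}}\le u-l.$$
   Context: $[P]$ is the Iverson bracket ($1$ if $P$ holds, $0$ otherwise). For a family $(\alpha_i)$ of non-negative reals indexed by $\{1,2,\dots\}\cup\{\omega\}$ (with $n<\omega$ for all positive integers $n$), $\kappa_i(\alpha_i)$ is the limit of the approximants $P_0=\alpha_\omega$, $P_n=\sqrt{\alpha_1^{2^1}+\sqrt{\alpha_2^{2^2}+\dots+\sqrt{\alpha_n^{2^n}+\alpha_\omega^{2^n}}}}$ ($n$ nested roots). *)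

From Stdlib Require Import Reals.
From Coquelicot Require Import Coquelicot.
Open Scope R_scope.

(* Index set {1,2,...} ∪ {ω}.  [Fin n] stands for the positive integer n
   ([Fin 0] is never used by the definitions below). *)
Inductive idx : Type := Fin (n : nat) | Omega.

(* tail a k m = sqrt(a_k^{2^k} + sqrt(a_{k+1}^{2^{k+1}} + ... +
     sqrt(a_{k+m-1}^{2^{k+m-1}} + a_ω^{2^{k+m-1}})))   (m nested roots);
   tail a k 0 = a_ω^{2^{k-1}}. *)
Fixpoint tail (a : idx -> R) (k m : nat) : R :=
  match m with
  | O => a Omega ^ (2 ^ (k - 1))
  | S m' => sqrt (a (Fin k) ^ (2 ^ k) + tail a (S k) m')
  end.

Definition approx (a : idx -> R) (n : nat) : R := tail a 1 n.

Definition kappa (a : idx -> R) : R := real (Lim_seq (approx a)).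

Definition beta (I0 : nat) (alpha : nat -> R) (x : R) (i : idx) : R :=
  match i with
  | Fin n => (if Nat.ltb n I0 then 1 else 0) * alpha n
             + (if Nat.eqb n I0 then 1 else 0) * x
  | Omega => 0
  end.

(* Since β^(x) vanishes beyond I0, the approximants are constant from the
   I0-th one on, so κ(β^(x)) is a finite nested radical in x.  Working from the
   innermost root outwards, the radical started at level j exceeds x^(2^(j-1))
   by an amount that does not increase with x; passing from level j+1 to level
   j is the concavity of the square root, in the form that sqrt (b + c) - sqrt b
   is antitone in b.  At level 1 this is κ(β^(u)) - u <= κ(β^(l)) - l. *)

From Stdlib Require Import Reals Lra Lia.
From Coquelicot Require Import Coquelicot.
Open Scope R_scope.

Lemma sqrt_add_sub_antitone (a b c : R) :
  0 <= a -> a <= b -> 0 <= c ->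
  sqrt (b + c) - sqrt b <= sqrt (a + c) - sqrt a.
Proof.
  intros Ha Hab Hc.
  enough (Hsum : sqrt (b + c) + sqrt a <= sqrt (a + c) + sqrt b) by lra.
  apply Rsqr_incr_0_var.
  - unfold Rsqr.
    replace ((sqrt (b + c) + sqrt a) * (sqrt (b + c) + sqrt a))
      with (sqrt (b + c) * sqrt (b + c) + sqrt a * sqrt a
            + 2 * sqrt ((b + c) * a)) by (rewrite sqrt_mult by lra; ring).
    replace ((sqrt (a + c) + sqrt b) * (sqrt (a + c) + sqrt b))
      with (sqrt (a + c) * sqrt (a + c) + sqrt b * sqrt b
            + 2 * sqrt ((a + c) * b)) by (rewrite sqrt_mult by lra; ring).
    rewrite !sqrt_sqrt by lra.
    assert (sqrt ((b + c) * a) <= sqrt ((a + c) * b))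
      by (apply sqrt_le_1_alt; nra).
    lra.
  - pose proof (sqrt_pos (a + c)); pose proof (sqrt_pos b); lra.
Qed.

Lemma sqrt_add_sub_sqrt_le (A X Y s t : R) :
  0 <= A -> 0 <= t -> t <= s -> s <= X -> t <= Y -> X - s <= Y - t ->
  sqrt (A + X) - sqrt s <= sqrt (A + Y) - sqrt t.
Proof.
  intros HA Ht Hts HsX HtY Hgap.
  pose proof (sqrt_add_sub_antitone t s (A + (X - s)) Ht Hts ltac:(lra)).
  replace (s + (A + (X - s))) with (A + X) in * by ring.
  assert (sqrt (t + (A + (X - s))) <= sqrt (A + Y)) by (apply sqrt_le_1_alt; lra).
  lra.
Qed.

Lemma pow0_pow2 (n : nat) : 0 ^ (2 ^ n) = 0.
Proof. apply pow_ne_zero, Nat.pow_nonzero; lia. Qed.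

Lemma sqrt_pow_pow2_succ (x : R) (n : nat) :
  0 <= x -> sqrt (x ^ (2 ^ S n)) = x ^ (2 ^ n).
Proof.
  intros Hx.
  rewrite Nat.pow_succ_r', Nat.mul_comm, pow_mult.
  apply sqrt_pow2, pow_le, Hx.
Qed.

Lemma tail_eq0 (a : idx -> R) (k m : nat) :
  (forall i, (k <= i)%nat -> a (Fin i) = 0) -> a Omega = 0 ->
  tail a k m = 0.
Proof.
  intros Hfin Homega.
  revert k Hfin; induction m as [|m IHm]; intros k Hfin; cbn [tail].
  - rewrite Homega. apply pow0_pow2.
  - rewrite Hfin, pow0_pow2, IHm by (auto; intros; apply Hfin; lia).
    rewrite Rplus_0_r. apply sqrt_0.
Qed.

Lemma tail_add_stationary (a : idx -> R) (k m n : nat) :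
  (forall i, (k + m <= i)%nat -> a (Fin i) = 0) -> a Omega = 0 ->
  tail a k (m + n) = tail a k m.
Proof.
  intros Hfin Homega.
  revert k Hfin; induction m as [|m IHm]; intros k Hfin.
  - cbn [Nat.add tail].
    rewrite tail_eq0 by (auto; intros; apply Hfin; lia).
    rewrite Homega, pow0_pow2. reflexivity.
  - cbn [Nat.add tail]. rewrite IHm; [reflexivity|].
    intros i Hi. apply Hfin. lia.
Qed.

Lemma kappa_eq_approx (a : idx -> R) (N : nat) :
  (forall i, (N < i)%nat -> a (Fin i) = 0) -> a Omega = 0 ->
  kappa a = approx a N.
Proof.
  intros Hfin Homega. unfold kappa.
  rewrite <- (Lim_seq_incr_n _ N).
  rewrite (Lim_seq_ext _ (fun _ => approx a N)).
  - rewrite Lim_seq_const. reflexivity.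
  - intros n. unfold approx. rewrite Nat.add_comm.
    apply tail_add_stationary; [intros i Hi; apply Hfin; lia | exact Homega].
Qed.

Section Beta.

Variables (I0 : nat) (alpha : nat -> R).

Lemma beta_Fin_lt (x : R) (i : nat) : (i < I0)%nat -> beta I0 alpha x (Fin i) = alpha i.
Proof.
  intros Hi. cbn [beta].
  rewrite (proj2 (Nat.ltb_lt i I0) Hi), (proj2 (Nat.eqb_neq i I0)) by lia. ring.
Qed.

Lemma beta_Fin_top (x : R) : beta I0 alpha x (Fin I0) = x.
Proof. cbn [beta]. rewrite Nat.ltb_irrefl, Nat.eqb_refl. ring. Qed.

Lemma beta_Fin_gt (x : R) (i : nat) : (I0 < i)%nat -> beta I0 alpha x (Fin i) = 0.
Proof.
  intros Hi. cbn [beta].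
  rewrite (proj2 (Nat.ltb_ge i I0)), (proj2 (Nat.eqb_neq i I0)) by lia. ring.
Qed.

Lemma kappa_beta (x : R) : kappa (beta I0 alpha x) = tail (beta I0 alpha x) 1 I0.
Proof. apply kappa_eq_approx; [apply beta_Fin_gt | reflexivity]. Qed.

Lemma tail_beta_top (x : R) (j : nat) :
  0 <= x -> S j = I0 -> tail (beta I0 alpha x) (S j) 1 = x ^ (2 ^ j).
Proof.
  intros Hx Hj. cbn [tail].
  rewrite Hj, beta_Fin_top. cbn [beta]. rewrite pow0_pow2, Rplus_0_r, <- Hj.
  apply sqrt_pow_pow2_succ, Hx.
Qed.

Hypothesis alpha_ge0 : forall i : nat, (1 <= i)%nat -> (i < I0)%nat -> 0 <= alpha i.

Lemma tail_beta_ge_pow (x : R) (j m : nat) :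
  0 <= x -> (S j + m = I0)%nat -> x ^ (2 ^ j) <= tail (beta I0 alpha x) (S j) (S m).
Proof.
  intros Hx. revert j; induction m as [|m IHm]; intros j Hjm.
  - rewrite tail_beta_top by (auto; lia). lra.
  - change (tail (beta I0 alpha x) (S j) (S (S m)))
      with (sqrt (beta I0 alpha x (Fin (S j)) ^ (2 ^ S j)
                  + tail (beta I0 alpha x) (S (S j)) (S m))).
    rewrite beta_Fin_lt, <- sqrt_pow_pow2_succ by (auto; lia).
    apply sqrt_le_1_alt.
    assert (0 <= alpha (S j) ^ (2 ^ S j)) by (apply pow_le, alpha_ge0; lia).
    specialize (IHm (S j) ltac:(lia)). lra.
Qed.

Lemma tail_beta_sub_pow_antitone (l u : R) (j m : nat) :
  0 <= l -> l <= u -> (S j + m = I0)%nat ->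
  tail (beta I0 alpha u) (S j) (S m) - u ^ (2 ^ j)
    <= tail (beta I0 alpha l) (S j) (S m) - l ^ (2 ^ j).
Proof.
  intros Hl Hlu. revert j; induction m as [|m IHm]; intros j Hjm.
  - rewrite !tail_beta_top by (auto; lia || lra). lra.
  - change (tail (beta I0 alpha ?x) (S j) (S (S m)))
      with (sqrt (beta I0 alpha x (Fin (S j)) ^ (2 ^ S j)
                  + tail (beta I0 alpha x) (S (S j)) (S m))).
    rewrite !beta_Fin_lt, <- (sqrt_pow_pow2_succ u), <- (sqrt_pow_pow2_succ l)
      by (auto; lia || lra).
    apply sqrt_add_sub_sqrt_le.
    + apply pow_le, alpha_ge0; lia.
    + apply pow_le, Hl.
    + apply pow_incr; lra.
    + apply tail_beta_ge_pow; lia || lra.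
    + apply tail_beta_ge_pow; lia || lra.
    + apply IHm; lia.
Qed.

End Beta.

Theorem lemma5 (I0 : nat) (alpha : nat -> R) (l u : R) :
  (1 <= I0)%nat ->
  (forall i : nat, (1 <= i)%nat -> (i < I0)%nat -> 0 <= alpha i) ->
  0 <= l -> l < u ->
  kappa (beta I0 alpha u) - kappa (beta I0 alpha l) <= u - l.
Proof.
  intros HI Halpha Hl Hlu.
  destruct I0 as [|m]; [lia|].
  rewrite !kappa_beta.
  pose proof (tail_beta_sub_pow_antitone (S m) alpha Halpha l u 0 m
                Hl ltac:(lra) eq_refl) as Hgap.
  rewrite !pow_1 in Hgap. lra.
Qed.
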